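(* For the RHA process, let $0\le m\le n$ and let $A_{nm}$ be the event that the $2^{n-m}$ consecutive length-$2^m$ blocks $X^m_{2^{n-m}},X^m_{2^{n-m}+1},\dots,X^m_{2^{n-m+1}-1}$ composing $X^n_1$ are pairwise distinct (so $P(A_{nn})=1$). Then $P(A_{nm})=0$ if $k_m<2^{n-m}$, whereas if $k_m\ge2^{n-m}$ and $m<n$, $$P(A_{nm})=P(A_{n,m+1})\,\frac{k_m(k_m-1)\cdots(k_m-2^{n-m}+1)}{k_m^2(k_m^2-1)\cdots(k_m^2-2^{n-m-1}+1)}.$$
   Context: Random hierarchical association (RHA) process. Fix positive integers $(k_n)_{n\ge0}$ (perplexities) with $k_{n-1}\le k_n\le k_{n-1}^2$ for all $n\ge1$. On a probability space $(\Omega,\mathcal J,P)$ let, for each $n\ge1$, $(L_{nj},R_{nj})_{j=1}^{k_n}$ be the lexicographically sorted enumeration of a uniformly random $k_n$-element subset of $\{1,\dots,k_{n-1}\}^2$ (each of the $\binom{k_{n-1}^2}{k_n}$ subsets equally likely), independently over $n$. Let $(C_n)_{n\ge0}$ be independent, independent of all $(L_{nj},R_{nj})$, with $C_n$ uniform on $\{1,\dots,k_n\}$. Define strings $Y^0_j=j$ (length 1) for $1\le j\le k_0$ and $Y^n_j=Y^{n-1}_{L_{nj}}Y^{n-1}_{R_{nj}}$ (concatenation); so $Y^n_1,\dots,Y^n_{k_n}$ are distinct strings of length $2^n$. The RHA process is $\mathcal X=Y^0_{C_0}Y^1_{C_1}Y^2_{C_2}\cdots=X_1X_2X_3\cdots$,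 $X_{k:l}=X_k\cdots X_l$; for $n\ge0$, $j\ge1$, $X^n_j=X_{j2^n:(j+1)2^n-1}$ (so $X^n_1=Y^n_{C_n}$). *)

From HB Require Import structures.
From mathcomp Require Import all_boot all_order all_algebra.
Set Implicit Arguments. Unset Strict Implicit. Unset Printing Implicit Defensive.
Import GRing.Theory Num.Theory.

Definition lexle (p q : nat * nat) : bool :=
  (p.1 < q.1)%N || ((p.1 == q.1) && (p.2 <= q.2)%N).

(* a subset of {1..a}^2 (encoded with 0-based ordinals), as its
   lexicographically sorted list of pairs (L_j, R_j), j = 1..#S, values in 1..a *)
Definition pairs_of (a : nat) (T : {set 'I_a * 'I_a}) : seq (nat * nat) :=
  sort lexle [seq ((val p.1).+1, (val p.2).+1) | p <- enum T].

(* all b-element subsets of {1..a}^2, each once (uniform law = counting) *)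
Definition level_space (a b : nat) : seq (seq (nat * nat)) :=
  [seq pairs_of T | T <- enum [pred T : {set 'I_a * 'I_a} | #|T| == b]].

(* all choices of levels 1..n : list whose (i-1)-th entry is level i *)
Fixpoint levels_space (k : nat -> nat) (n : nat) : seq (seq (seq (nat * nat))) :=
  match n with
  | 0 => [:: [::]]
  | i.+1 => [seq rcons s l | s <- levels_space k i, l <- level_space (k i) (k i.+1)]
  end.

Fixpoint cs_space (k : nat -> nat) (n : nat) : seq (seq nat) :=
  match n with
  | 0 => [:: [::]]
  | i.+1 => [seq rcons s c | s <- cs_space k i, c <- iota 1 (k i)]
  end.

(* a sample: (levels 1..n, (C_0..C_n)) *)
Definition sample := (seq (seq (nat * nat)) * seq nat)%type.

Definition Omega (k : nat -> nat) (n : nat) : seq sample :=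
  [seq (L, c) | L <- levels_space k n, c <- cs_space k n.+1].

Fixpoint Y (L : seq (seq (nat * nat))) (i j : nat) : seq nat :=
  match i with
  | 0 => [:: j]
  | i'.+1 => let p := nth (0, 0) (nth [::] L i') j.-1 in
             Y L i' p.1 ++ Y L i' p.2
  end.

(* the prefix Y^0_{C_0} Y^1_{C_1} ... Y^n_{C_n} of the process X *)
Definition Xprefix (n : nat) (w : sample) : seq nat :=
  flatten [seq Y w.1 i (nth 0 w.2 i) | i <- iota 0 n.+1].

(* X_{a:b} (1-based, inclusive), read off the prefix *)
Definition Xsub (n : nat) (w : sample) (a b : nat) : seq nat :=
  take (b.+1 - a) (drop a.-1 (Xprefix n w)).

Definition Xblock (n : nat) (w : sample) (m j : nat) : seq nat :=
  Xsub n w (j * 2 ^ m) ((j.+1) * 2 ^ m).-1.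

Definition A_event (n m : nat) (w : sample) : bool :=
  uniq [seq Xblock n w m j | j <- iota (2 ^ (n - m)) (2 ^ (n - m))].

Definition Prob (k : nat -> nat) (n : nat) (E : sample -> bool) : rat :=
  ((count E (Omega k n))%:R / (size (Omega k n))%:R)%R.

From HB Require Import structures.
From mathcomp Require Import all_boot all_order all_algebra.
From mathcomp Require Import zify ring.
Set Implicit Arguments. Unset Strict Implicit. Unset Printing Implicit Defensive.

(* Let n = m + e.  The blocks X^m_j, 2^e <= j < 2^(e+1), of X^n_1 = Y^n_{C_n}
   are the images under Y^m of the letters of the word of length 2^e obtained
   from the one-letter word C_n by replacing every letter a of level i by the
   pair (L_ia, R_ia), for i = n, ..., m+1.  As Y^m is injective on {1..k_m},
   A_nm holds iff this descendant word has distinct letters.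
   Given a word s of 2d distinct letters of level i-1, a level-i configuration
   admits a (unique) word of length d expanding to s iff it contains the d
   pairs (s_1, s_2), (s_3, s_4), ...; there are C(k_(i-1)^2 - d, k_i - d) such
   configurations, whatever s is.  Hence #A_nm is a product of such binomials
   times the number k_m^_(2^e) of injective words, and the ratio
   P(A_nm) / P(A_n,m+1) follows from C(a - d, N - d) a^_d = C(a, N) N^_d. *)

Lemma count_as_sum (T : Type) (p : pred T) r : count p r = \sum_(x <- r) (p x : nat).
Proof. by elim: r => [|x r IH]; rewrite ?big_nil ?big_cons //= IH. Qed.

Lemma sum_nat_const_seq (T : Type) (r : seq T) c : \sum_(x <- r) c = size r * c.
Proof. by elim: r => [|x r IH]; rewrite ?big_nil ?big_cons //= IH mulSn. Qed.

Lemma sum_nat_pick (T : eqType) (U : seq T) (F : T -> nat) y : uniq U -> y \in U ->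
  \sum_(u <- U) (y == u) * F u = F y.
Proof.
elim: U => [|u U IH] //= /andP[uU uniqU]; rewrite inE big_cons.
case: (eqVneq y u) => [yu|_] /= => [_|yU].
  rewrite mul1n big1_seq ?addn0 -?yu // => v /andP[_ vU].
  by case: (eqVneq y v) => [yv|] //=; move: uU; rewrite -yu yv vU.
by rewrite mul0n add0n IH.
Qed.

Lemma sum_nat_fibers (X T : eqType) (r : seq X) (U : seq T) (f : X -> T) (F : T -> nat) :
  uniq U -> {in r, forall x, f x \in U} ->
  \sum_(x <- r) F (f x) = \sum_(u <- U) F u * \sum_(x <- r) (f x == u).
Proof.
move=> uU fU.
rewrite (eq_big_seq (fun x => \sum_(u <- U) (f x == u) * F u)); last first.
  by move=> x xr; rewrite sum_nat_pick // fU.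
rewrite exchange_big /=; apply: eq_bigr => u _.
by rewrite big_distrr /=; apply: eq_bigr => x _; rewrite mulnC.
Qed.

Lemma uniq_flatten_map_inv (T : eqType) (h : T -> seq nat) u :
  (forall a, 0 < size (h a)) -> uniq (flatten (map h u)) -> uniq u.
Proof.
move=> hpos; elim: u => [|a u IH] //=; rewrite cat_uniq => /and3P[_ hn uf].
rewrite IH // andbT; apply/negP => au.
move/negP: hn; apply; apply/hasP.
exists (nth 0 (h a) 0); last exact: mem_nth.
by apply/flatten_mapP; exists a => //; apply: mem_nth.
Qed.

Lemma nth_flatten_block (T : Type) (ss : seq (seq T)) b q :
  all (fun x => size x == b) ss -> q < size ss ->
  take b (drop (q * b) (flatten ss)) = nth [::] ss q.
Proof.
elim: ss q => [|x ss IH] q //= /andP[/eqP sx hs].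
case: q => [|q] qs /=; first by rewrite mul0n drop0 take_size_cat.
by rewrite mulSn addnC -drop_drop drop_size_cat // IH.
Qed.

Lemma ffactD a r j : a ^_ (r + j) = a ^_ r * (a - r) ^_ j.
Proof.
elim: r a => [|r IH] a; first by rewrite add0n subn0 mul1n.
rewrite addSn !ffactnS IH mulnA; congr (_ * _); congr (_ ^_ _); lia.
Qed.

Lemma bin_sub_ffact a N d : d <= N -> 'C(a - d, N - d) * a ^_ d = 'C(a, N) * N ^_ d.
Proof.
move=> dN; apply/eqP; rewrite -(eqn_pmul2r (fact_gt0 (N - d))).
by rewrite mulnAC bin_ffact mulnC -ffactD subnKC // -mulnA ffact_fact // bin_ffact eqxx.
Qed.

Lemma card_supsets (U : finType) (X : {set U}) N :
  #|[set T : {set U} | (X \subset T) && (#|T| == N)]| =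
  if #|X| <= N then 'C(#|U| - #|X|, N - #|X|) else 0.
Proof.
have XC (A : {set U}) : A \subset ~: X -> A :&: X = set0.
  move=> AX; apply/setP => x; rewrite !inE; apply/negbTE/negP => /andP[xA xX].
  by have := subsetP AX _ xA; rewrite inE xX.
case: leqP => hXN; last first.
  apply/eqP; rewrite cards_eq0; apply/eqP/setP => T; rewrite !inE.
  apply/negbTE/negP => /andP[XT /eqP TN].
  by have := subset_leq_card XT; rewrite TN leqNgt hXN.
set S := [set T : {set U} | _].
have -> : #|S| = #|(fun T => T :\: X) @: S|.
  rewrite card_in_imset // => T1 T2; rewrite !inE => /andP[X1 _] /andP[X2 _] E.
  apply/setP => x; have := congr1 (fun A : {set U} => x \in A) E; rewrite /= !inE.
  by case: (boolP (x \in X)) => xX //=; rewrite (subsetP X1 _ xX) (subsetP X2 _ xX).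
rewrite -[#|U|](cardsC X) addKn -cards_draws; apply: eq_card => A.
rewrite [in RHS]inE; apply/imsetP/andP => [[T]|[AX /eqP AN]].
  rewrite inE => /andP[XT /eqP TN] ->; split.
    by apply/subsetP => x; rewrite !inE => /andP[].
  by rewrite cardsD (setIidPr XT) TN.
exists (A :|: X).
  by rewrite inE subsetUr /= cardsU XC // cards0 subn0 AN subnK.
apply/setP => x; rewrite !inE; have /setP/(_ x) := XC _ AX; rewrite !inE.
by case: (x \in X); rewrite ?andbF ?orbF ?andbT.
Qed.

Definition expand (l : seq (nat * nat)) (t : seq nat) : seq nat :=
  flatten [seq [:: (nth (0, 0) l a.-1).1; (nth (0, 0) l a.-1).2] | a <- t].

Fixpoint descend (L : seq (seq (nat * nat))) (m e : nat) (t : seq nat) : seq nat :=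
  if e is e'.+1 then descend L m e' (expand (nth [::] L (m + e')) t) else t.

Fixpoint words (K d : nat) : seq (seq nat) :=
  if d is d'.+1 then [seq a :: s | a <- iota 1 K, s <- words K d'] else [:: [::]].

Lemma expand_cat l s1 s2 : expand l (s1 ++ s2) = expand l s1 ++ expand l s2.
Proof. by rewrite /expand map_cat flatten_cat. Qed.

Lemma expand_cons l a t : expand l (a :: t) =
  (nth (0, 0) l a.-1).1 :: (nth (0, 0) l a.-1).2 :: expand l t.
Proof. by []. Qed.

Lemma size_expand l t : size (expand l t) = (size t).*2.
Proof. by elim: t => [|a t IH] //; rewrite expand_cons /= IH. Qed.

Lemma descend_cat L m e s1 s2 : descend L m e (s1 ++ s2) = descend L m e s1 ++ descend L m e s2.
Proof. by elim: e s1 s2 => //= e IH s1 s2; rewrite expand_cat IH. Qed.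

Lemma size_descend L m e t : size (descend L m e t) = size t * 2 ^ e.
Proof.
elim: e t => [|e IH] t /=; first by rewrite muln1.
by rewrite IH size_expand expnS -mul2n mulnCA mulnA.
Qed.

Lemma descend_flatten L m e t : descend L m e t = flatten [seq descend L m e [:: a] | a <- t].
Proof.
elim: t => [|a t IH]; first by elim: e.
by rewrite -cat1s descend_cat IH.
Qed.

Lemma uniq_descend L m e u : uniq (descend L m e u) -> uniq u.
Proof.
rewrite descend_flatten; apply: uniq_flatten_map_inv => a.
by rewrite size_descend mul1n expn_gt0.
Qed.

Lemma descend_ext L L' m e t : (forall j, j < m + e -> nth [::] L j = nth [::] L' j) ->
  descend L m e t = descend L' m e t.
Proof.
elim: e t => [|e IH] t H //=.
rewrite H ?addnS ?ltnSn //; apply: IH => j Hj; apply: H; rewrite addnS ltnS ltnW //.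
Qed.

Lemma descend_rcons L l m e t : size L = m + e ->
  descend (rcons L l) m e.+1 t = descend L m e (expand l t).
Proof.
move=> sL /=; rewrite nth_rcons sL ltnn eqxx.
by apply: descend_ext => j Hj; rewrite nth_rcons sL Hj.
Qed.

Lemma size_Y L i a : size (Y L i a) = 2 ^ i.
Proof. by elim: i a => [|i IH] a //=; rewrite size_cat !IH expnS mul2n addnn. Qed.

Lemma Y_descend L m e a : Y L (m + e) a = flatten (map (Y L m) (descend L m e [:: a])).
Proof.
elim: e a => [|e IH] a; first by rewrite addn0 /= cats0.
rewrite addnS /= !IH /expand /=.
by rewrite -(cat1s _ [:: _]) descend_cat map_cat flatten_cat.
Qed.

Lemma mem_words K d s : (s \in words K d) = (size s == d) && all (fun a => 0 < a <= K) s.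
Proof.
elim: d s => [|d IH] [|a s] //=.
- by apply/negbTE/allpairsP => -[[x y] [_ _ //]].
- rewrite eqSS; apply/allpairsP/idP => [[[x y] [/= Hx Hy [-> ->]]]|].
    by move: Hx; rewrite mem_iota => /andP[-> /=]; rewrite add1n ltnS => ->; rewrite -IH.
  move=> /andP[Hs /andP[Ha Hall]]; exists (a, s); split => //=.
    by rewrite mem_iota add1n ltnS.
  by rewrite IH Hs.
Qed.

Lemma uniq_words K d : uniq (words K d).
Proof.
elim: d => [|d IH] //=.
apply: allpairs_uniq => //; first exact: iota_uniq.
by move=> [a s] [b t] _ _ /= [-> ->].
Qed.

Lemma words1_sum K (F : seq nat -> nat) :
  \sum_(a <- iota 1 K) F [:: a] = \sum_(t <- words K 1) F t.
Proof.
have -> : words K 1 = [seq a :: s | a <- iota 1 K, s <- [:: [::]]] by [].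
by rewrite big_allpairs_dep; apply: eq_bigr => a _; rewrite big_seq1.
Qed.

Lemma count_uniq_words K d : count uniq (words K d) = K ^_ d.
Proof.
rewrite count_as_sum; elim: d => [|d IH]; first by rewrite big_seq1.
rewrite /= big_allpairs_dep /= exchange_big /= ffactnSr -IH big_distrl /=.
apply: eq_big_seq => s; rewrite mem_words => /andP[/eqP sz hall].
case us: (uniq s); last by rewrite big1 // => a _; rewrite andbF.
rewrite mul1n (eq_bigr (fun i => (i \notin s : nat))) => [|i _]; last by rewrite andbT.
rewrite -count_as_sum.
have /perm_size : perm_eq [seq i <- iota 1 K | i \in s] s.
  apply: uniq_perm; rewrite ?filter_uniq ?iota_uniq // => x.
  rewrite mem_filter andb_idr // => xs; rewrite mem_iota add1n ltnS.
  by move/allP: hall => /(_ x xs).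
rewrite size_filter -sz => <-.
by rewrite -[X in X - _](size_iota 1 K) -(count_predC (mem s)) addKn.
Qed.

Fixpoint pairs_up (u : seq nat) : seq (nat * nat) :=
  if u is x :: y :: u' then (x, y) :: pairs_up u' else [::].

Lemma mem_pairs_up u z : z \in pairs_up u -> (z.1 \in u) && (z.2 \in u).
Proof.
have [n] := ubnP (size u); elim: n u => // n IH [|x [|y u]] //= lt_u.
rewrite inE => /orP[/eqP -> /=|zu]; first by rewrite !inE !eqxx orbT.
have /andP[h1 h2] := IH u ltac:(lia) zu.
by rewrite !inE h1 h2 !orbT.
Qed.

Lemma uniq_pairs_up u : uniq u -> uniq (pairs_up u).
Proof.
have [n] := ubnP (size u); elim: n u => // n IH [|x [|y u]] //= lt_u.
rewrite !inE negb_or => /andP[/andP[_ xu] /andP[_ uu]].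
rewrite IH // ?andbT; last by move: lt_u => /=; lia.
by apply/negP => /mem_pairs_up /= /andP[]; rewrite (negbTE xu).
Qed.

Lemma size_pairs_up d u : size u = d.*2 -> size (pairs_up u) = d.
Proof. by elim: d u => [|d IH] [|x [|y u]] //= [h]; rewrite IH. Qed.

Lemma count_nth_eq (l : seq (nat * nat)) z : uniq l ->
  count (fun a => nth (0, 0) l a.-1 == z) (iota 1 (size l)) = (z \in l).
Proof.
move=> ul; rewrite -(count_uniq_mem z ul) -{3}(mkseq_nth (0, 0) l) /mkseq count_map.
by rewrite (iotaDl 1 0) count_map.
Qed.

Lemma sum_expand_eq l d u : uniq l -> size u = d.*2 ->
  \sum_(t <- words (size l) d) (expand l t == u) = all (mem l) (pairs_up u).
Proof.
move=> ul; elim: d u => [|d IH] u.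
  by case: u => [|//] _; rewrite big_seq1.
case: u => [|x [|y u]] //= [su]; rewrite big_allpairs_dep /=.
rewrite (eq_bigr (fun a => (nth (0, 0) l a.-1 == (x, y)) *
    \sum_(t <- words (size l) d) (expand l t == u))); last first.
  move=> a _; rewrite big_distrr /=; apply: eq_bigr => t _.
  rewrite expand_cons !eqseq_cons; case: (nth _ _ _) => p1 p2 /=.
  by rewrite xpair_eqE; case: (p1 == x); case: (p2 == y); case: (expand l t == u).
rewrite -big_distrl /= -count_as_sum count_nth_eq // IH //.
by case: (_ \in l); case: (all _ _).
Qed.

Definition succ_pair K (p : 'I_K * 'I_K) : nat * nat := ((val p.1).+1, (val p.2).+1).

Lemma succ_pair_inj K : injective (@succ_pair K).
Proof. by move=> [a b] [c d] [/eqP h1 /eqP h2]; congr pair; apply/val_inj/eqP. Qed.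

Lemma succ_pair_surj K z : (0 < z.1 <= K) && (0 < z.2 <= K) ->
  exists p : 'I_K * 'I_K, z = succ_pair p.
Proof.
case: z => x y /= /andP[/andP[x0 xK] /andP[y0 yK]].
have xK' : x.-1 < K by rewrite prednK.
have yK' : y.-1 < K by rewrite prednK.
by exists (Ordinal xK', Ordinal yK'); rewrite /succ_pair /= !prednK.
Qed.

Lemma mem_pairs_of K (T : {set 'I_K * 'I_K}) z :
  reflect (exists2 p, p \in T & z = succ_pair p) (z \in pairs_of T).
Proof.
rewrite /pairs_of mem_sort; apply: (iffP mapP) => [[p]|[p]].
  by rewrite mem_enum => pT ->; exists p.
by move=> pT ->; exists p; rewrite ?mem_enum.
Qed.

Lemma uniq_pairs_of K (T : {set 'I_K * 'I_K}) : uniq (pairs_of T).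
Proof. by rewrite /pairs_of sort_uniq (map_inj_uniq (@succ_pair_inj K)) enum_uniq. Qed.

Lemma size_pairs_of K (T : {set 'I_K * 'I_K}) : size (pairs_of T) = #|T|.
Proof. by rewrite /pairs_of size_sort size_map cardE. Qed.

Lemma size_level_space K N : size (level_space K N) = 'C(K * K, N).
Proof.
rewrite /level_space size_map -cardE.
have := card_draws ('I_K * 'I_K)%type N; rewrite card_prod card_ord => <-.
by apply: eq_card => T; rewrite !inE.
Qed.

Definition valid_level (K N : nat) (l : seq (nat * nat)) :=
  [/\ uniq l, size l = N & forall z, z \in l -> (0 < z.1 <= K) && (0 < z.2 <= K)].

Lemma level_space_valid K N l : l \in level_space K N -> valid_level K N l.
Proof.
case/mapP => T; rewrite mem_enum inE => /eqP TN ->.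
split; [exact: uniq_pairs_of | by rewrite size_pairs_of | ].
by move=> z /mem_pairs_of [p _ ->] /=; rewrite !ltn_ord.
Qed.

Lemma expand_range K N l t : valid_level K N l -> all (fun a => 0 < a <= N) t ->
  all (fun a => 0 < a <= K) (expand l t).
Proof.
case=> ul sl hl; elim: t => [|a t IH] // /andP[/andP[a0 aN] ht].
rewrite expand_cons /= IH // andbT.
have : nth (0, 0) l a.-1 \in l by apply: mem_nth; rewrite sl prednK.
by move/hl => /andP[-> ->].
Qed.

Definition pair_set K (u : seq nat) : {set 'I_K * 'I_K} :=
  [set p | succ_pair p \in pairs_up u].

Lemma all_pairs_up_subset K (T : {set 'I_K * 'I_K}) u : all (fun a => 0 < a <= K) u ->
  all (mem (pairs_of T)) (pairs_up u) = (pair_set K u \subset T).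
Proof.
move=> /allP hu; apply/allP/subsetP => [H p|H z zu].
  by rewrite inE => /H /mem_pairs_of [q qT /succ_pair_inj ->].
have /andP[z1 z2] := mem_pairs_up zu.
have [p zp] : exists p : 'I_K * 'I_K, z = succ_pair p.
  by apply: succ_pair_surj; rewrite !hu.
by apply/mem_pairs_of; exists p; rewrite // H // inE -zp.
Qed.

Lemma card_pair_set K u d : uniq u -> size u = d.*2 -> all (fun a => 0 < a <= K) u ->
  #|pair_set K u| = d.
Proof.
move=> uu su /allP hu.
rewrite cardE -(size_map (@succ_pair K)) -(size_pairs_up su); apply: perm_size.
apply: uniq_perm; first by rewrite (map_inj_uniq (@succ_pair_inj K)) enum_uniq.
  exact: uniq_pairs_up.
move=> z; apply/mapP/idP => [[p]|zu]; first by rewrite mem_enum inE => pz ->.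
have /andP[z1 z2] := mem_pairs_up zu.
have [p zp] : exists p : 'I_K * 'I_K, z = succ_pair p.
  by apply: succ_pair_surj; rewrite !hu.
by exists p; rewrite // mem_enum inE -zp.
Qed.

Definition n_supersets (K N d : nat) := if d <= N then 'C(K * K - d, N - d) else 0.

Lemma sum_level_expand_eq K N d u :
  uniq u -> size u = d.*2 -> all (fun a => 0 < a <= K) u ->
  \sum_(l <- level_space K N) \sum_(t <- words N d) (expand l t == u) = n_supersets K N d.
Proof.
move=> uu su hu; rewrite /level_space big_map big_enum /=.
rewrite (eq_bigr (fun T : {set 'I_K * 'I_K} => (pair_set K u \subset T) : nat)); last first.
  move=> T /eqP TN; rewrite -TN -size_pairs_of sum_expand_eq ?uniq_pairs_of //.
  by rewrite all_pairs_up_subset.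
rewrite -big_mkcondr /= sum1_card.
rewrite (eq_card (B := [set T : {set 'I_K * 'I_K} | (pair_set K u \subset T) && (#|T| == N)]));
  last by move=> T; rewrite !inE andbC.
by rewrite card_supsets (card_pair_set uu su hu) card_prod card_ord.
Qed.

Section RHA.

Variable k : nat -> nat.

Definition valid_levels L n :=
  size L = n /\ forall j, j < n -> valid_level (k j) (k j.+1) (nth [::] L j).

Lemma levels_space_valid n L : L \in levels_space k n -> valid_levels L n.
Proof.
elim: n L => [|n IH] L /=; first by rewrite inE => /eqP ->; split.
case/allpairsP => -[s l] [/= /IH [ss hs] /level_space_valid hl ->].
split; first by rewrite size_rcons ss.
move=> j; rewrite ltnS leq_eqVlt => /orP[/eqP ->|jn].
  by rewrite nth_rcons ss ltnn eqxx.
by rewrite nth_rcons ss jn; apply: hs.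
Qed.

Lemma cs_space_valid n c : c \in cs_space k n ->
  size c = n /\ forall i, i < n -> 0 < nth 0 c i <= k i.
Proof.
elim: n c => [|n IH] c /=; first by rewrite inE => /eqP ->; split.
case/allpairsP => -[s a] [/= /IH [ss hs] ha ->].
split; first by rewrite size_rcons ss.
move=> i; rewrite ltnS leq_eqVlt => /orP[/eqP ->|jn].
  by rewrite nth_rcons ss ltnn eqxx; move: ha; rewrite mem_iota add1n ltnS.
by rewrite nth_rcons ss jn; apply: hs.
Qed.

Lemma descend_range L n m e t : valid_levels L n -> m + e <= n ->
  all (fun a => 0 < a <= k (m + e)) t -> all (fun a => 0 < a <= k m) (descend L m e t).
Proof.
move=> [sL hL]; elim: e t => [|e IH] t /=; first by rewrite addn0.
move=> hn ht; apply: IH; first by apply: leq_trans hn; rewrite addnS.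
apply: (expand_range (N := k (m + e).+1)); last by rewrite -addnS.
by apply: hL; rewrite -addnS.
Qed.

Lemma descend_words L n m e d t : valid_levels L n -> m + e <= n ->
  t \in words (k (m + e)) d -> descend L m e t \in words (k m) (d * 2 ^ e).
Proof.
move=> vL hn; rewrite !mem_words size_descend; case/andP => /eqP -> ht; rewrite eqxx /=.
exact: (descend_range vL).
Qed.

Lemma Y_inj L n i : valid_levels L n -> i <= n ->
  {in [pred a | 0 < a <= k i] &, injective (Y L i)}.
Proof.
move=> [sL hL]; elim: i => [|i IH] hi a b; rewrite !inE => ha hb //=; first by case.
have [ul sl vl] := hL i hi.
have mem_level c : 0 < c <= k i.+1 -> nth (0, 0) (nth [::] L i) c.-1 \in nth [::] L i.
  by case/andP => c0 ck; apply: mem_nth; rewrite sl prednK.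
move/eqP; rewrite eqseq_cat ?size_Y // => /andP[/eqP e1 /eqP e2].
have /andP[a1 a2] := vl _ (mem_level _ ha); have /andP[b1 b2] := vl _ (mem_level _ hb).
have /eqP : nth (0, 0) (nth [::] L i) a.-1 = nth (0, 0) (nth [::] L i) b.-1.
  rewrite [LHS]surjective_pairing [RHS]surjective_pairing.
  by congr pair; [exact: (IH (ltnW hi) _ _ a1 b1 e1) | exact: (IH (ltnW hi) _ _ a2 b2 e2)].
case/andP: ha => a0 aK; case/andP: hb => b0 bK.
rewrite nth_uniq ?sl ?prednK // => /eqP ab.
by rewrite -(prednK a0) -(prednK b0) ab.
Qed.

Lemma Xprefix_rcons L c n : Xprefix n (L, c) =
  flatten [seq Y L i (nth 0 c i) | i <- iota 0 n] ++ Y L n (nth 0 c n).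
Proof. by rewrite /Xprefix -addn1 iotaD map_cat flatten_cat /= cats0. Qed.

Lemma size_Xprefix_init L (f : nat -> nat) n :
  size (flatten [seq Y L i (f i) | i <- iota 0 n]) = (2 ^ n).-1.
Proof.
elim: n => [|n IH] //.
rewrite -addn1 iotaD map_cat flatten_cat size_cat IH /= cats0 size_Y add0n expnD.
by have := expn_gt0 2 n; lia.
Qed.

Lemma Xblock_descend L c m e j : 2 ^ e <= j < 2 ^ e + 2 ^ e ->
  Xblock (m + e) (L, c) m j = Y L m (nth 0 (descend L m e [:: nth 0 c (m + e)]) (j - 2 ^ e)).
Proof.
move=> /andP[jl jh]; rewrite /Xblock /Xsub Xprefix_rcons.
set s := descend _ _ _ _; set P := flatten _.
have sP : size P = (2 ^ (m + e)).-1 by rewrite /P size_Xprefix_init.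
have B0 : 0 < 2 ^ m by rewrite expn_gt0.
have E0 : 0 < 2 ^ e by rewrite expn_gt0.
have hle : 2 ^ e * 2 ^ m <= j * 2 ^ m by rewrite leq_mul2r jl orbT.
have EB0 : 0 < 2 ^ e * 2 ^ m by rewrite muln_gt0 E0.
have -> : ((j.+1 * 2 ^ m).-1).+1 - j * 2 ^ m = 2 ^ m.
  by rewrite prednK ?muln_gt0 // mulSn addnK.
rewrite drop_cat sP (expnD 2 m e) (mulnC (2 ^ m)) ltnNge.
have -> : (2 ^ e * 2 ^ m).-1 <= (j * 2 ^ m).-1 by rewrite -ltnS !prednK //; lia.
have -> : (j * 2 ^ m).-1 - (2 ^ e * 2 ^ m).-1 = (j - 2 ^ e) * 2 ^ m by rewrite mulnBl; lia.
rewrite /= Y_descend nth_flatten_block.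
- by rewrite (nth_map 0) // /s size_descend mul1n; lia.
- by apply/allP => x /mapP [y _ ->]; rewrite size_Y.
- by rewrite size_map /s size_descend mul1n; lia.
Qed.

Lemma A_event_uniq_descend L c m e :
  L \in levels_space k (m + e) -> c \in cs_space k (m + e).+1 ->
  A_event (m + e) m (L, c) = uniq (descend L m e [:: nth 0 c (m + e)]).
Proof.
move=> HL Hc; have vL := levels_space_valid HL; have [sc hc] := cs_space_valid Hc.
set s := descend _ _ _ _.
have ss : size s = 2 ^ e by rewrite /s size_descend mul1n.
have rs : all (fun a => 0 < a <= k m) s by apply: (descend_range vL) => //=; rewrite hc.
rewrite /A_event addKn.
have -> : [seq Xblock (m + e) (L, c) m j | j <- iota (2 ^ e) (2 ^ e)] =
          [seq Y L m (nth 0 s (j - 2 ^ e)) | j <- iota (2 ^ e) (2 ^ e)].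
  by apply/eq_in_map => j; rewrite mem_iota => /Xblock_descend.
rewrite -[X in iota X](addn0 (2 ^ e)) iotaDl -map_comp.
rewrite (eq_map (g := fun i => Y L m (nth 0 s i))); last by move=> i /=; rewrite addKn.
rewrite (map_comp (Y L m) (nth 0 s)) -ss -/(mkseq _ _) mkseq_nth.
rewrite map_inj_in_uniq // => a b ha hb.
by apply: (Y_inj vL (leq_addr _ _)); rewrite inE; move/allP: rs; apply.
Qed.


Fixpoint descent_weight m e d :=
  if e is e'.+1 then n_supersets (k (m + e')) (k (m + e').+1) d * descent_weight m e' d.*2
  else 1.

Lemma descent_weight_shift m e d :
  descent_weight m e.+1 d = descent_weight m.+1 e d * n_supersets (k m) (k m.+1) (d * 2 ^ e).
Proof.
elim: e m d => [|e IH] m d; first by rewrite /= addn0 muln1 mul1n expn0 muln1.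
have -> : descent_weight m e.+2 d =
  n_supersets (k (m + e.+1)) (k (m + e.+1).+1) d * descent_weight m e.+1 d.*2 by [].
have -> : descent_weight m.+1 e.+1 d =
  n_supersets (k (m.+1 + e)) (k (m.+1 + e).+1) d * descent_weight m.+1 e d.*2 by [].
by rewrite IH addSnnS mulnA expnS -mul2n mulnA (mulnC d 2).
Qed.

Lemma sum_descend_eq m e d s : uniq s -> s \in words (k m) (d * 2 ^ e) ->
  \sum_(L <- levels_space k (m + e)) \sum_(t <- words (k (m + e)) d) (descend L m e t == s)
  = size (levels_space k m) * descent_weight m e d.
Proof.
elim: e d s => [|e IH] d s us.
  rewrite expn0 muln1 addn0 /= => sU.
  rewrite (eq_bigr (fun _ => 1)) ?sum_nat_const_seq // => L _.
  by have := count_uniq_mem s (uniq_words (k m) d); rewrite count_as_sum sU.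
move=> sU; rewrite addnS /= big_allpairs_dep /=.
set K := k (m + e); set N := k (m + e).+1.
have sU' : s \in words (k m) (d.*2 * 2 ^ e).
  by move: sU; rewrite expnS -mul2n mulnA (mulnC d 2).
rewrite (eq_big_seq (fun L => (\sum_(u <- words K d.*2) (descend L m e u == s)) *
    n_supersets K N d)); last first.
  move=> L HL; have [sL hL] := levels_space_valid HL.
  rewrite (eq_bigr (fun l => \sum_(t <- words N d) (descend L m e (expand l t) == s))); last first.
    by move=> l _; apply: eq_bigr => t _; rewrite -(descend_rcons _ _ sL).
  rewrite -(big_allpairs (F := fun p => (descend L m e (expand p.1 p.2) == s) : nat)).
  rewrite (sum_nat_fibers (fun u => descend L m e u == s) (uniq_words K d.*2)); last first.
    move=> [l t] /allpairsP [[l' t'] [/= /level_space_valid hl ht [-> ->]]].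
    move: ht; rewrite !mem_words /= => /andP[/eqP st ht].
    by rewrite size_expand st eqxx /=; apply: expand_range hl ht.
  rewrite big_distrl /=; apply: eq_big_seq => u uU.
  case: eqP => [Du|]; last by rewrite !mul0n.
  rewrite !mul1n big_allpairs /=.
  move: uU; rewrite mem_words => /andP[/eqP su hu].
  by apply: sum_level_expand_eq => //; apply: (@uniq_descend L m e); rewrite Du.
by rewrite -big_distrl /= IH // mulnAC mulnA.
Qed.

Lemma cs_space_sum_last n (F : nat -> nat) :
  \sum_(c <- cs_space k n.+1) F (nth 0 c n) =
  size (cs_space k n) * \sum_(a <- iota 1 (k n)) F a.
Proof.
rewrite [cs_space k n.+1]/= big_allpairs_dep /=.
rewrite (eq_big_seq (fun _ => \sum_(a <- iota 1 (k n)) F a)) ?sum_nat_const_seq //.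
move=> s Hs; have [ss _] := cs_space_valid Hs.
by apply: eq_bigr => a _; rewrite nth_rcons ss ltnn eqxx.
Qed.

Lemma count_A_event m e : count (A_event (m + e) m) (Omega k (m + e)) =
  size (cs_space k (m + e)) *
    (size (levels_space k m) * descent_weight m e 1 * k m ^_ (2 ^ e)).
Proof.
rewrite count_as_sum /Omega big_allpairs.
rewrite (eq_big_seq (fun L => size (cs_space k (m + e)) *
   \sum_(t <- words (k (m + e)) 1) (uniq (descend L m e t) : nat))); last first.
  move=> L HL.
  rewrite (eq_big_seq (fun c => (uniq (descend L m e [:: nth 0 c (m + e)]) : nat))); last first.
    by move=> c Hc; rewrite (A_event_uniq_descend HL Hc).
  by rewrite (cs_space_sum_last (m + e) (fun a => uniq (descend L m e [:: a]) : nat)) (words1_sum _ (fun t => uniq (descend L m e t) : nat)).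
rewrite -big_distrr /=; congr (_ * _).
rewrite (eq_big_seq (fun L => \sum_(u <- words (k m) (1 * 2 ^ e)) (uniq u : nat) *
    \sum_(t <- words (k (m + e)) 1) (descend L m e t == u))); last first.
  move=> L HL; apply: (sum_nat_fibers (fun u => uniq u : nat) (uniq_words _ _)).
  by move=> t Ht; apply: (descend_words (levels_space_valid HL)).
rewrite exchange_big /=.
rewrite (eq_big_seq (fun u => (uniq u : nat) *
    (size (levels_space k m) * descent_weight m e 1))); last first.
  move=> u uU; rewrite -big_distrr /=.
  by case uu: (uniq u); rewrite ?mul0n // !mul1n; exact: (sum_descend_eq uu uU).
by rewrite -big_distrl /= -count_as_sum count_uniq_words mul1n mulnC.
Qed.

Lemma count_A_event_succ m e : 2 ^ e <= k m.+1 ->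
  count (A_event (m + e.+1) m) (Omega k (m + e.+1)) * (k m ^ 2) ^_ (2 ^ e) =
  count (A_event (m + e.+1) m.+1) (Omega k (m + e.+1)) * k m ^_ (2 ^ e.+1).
Proof.
move=> hN; rewrite count_A_event -addSnnS count_A_event addSnnS.
rewrite descent_weight_shift mul1n /n_supersets hN -mulnn.
rewrite [size (levels_space k m.+1)]/= size_allpairs size_level_space.
set S := size _; set Lm := size _; set W := descent_weight _ _ _.
set K := k m; set N := k m.+1.
transitivity (S * Lm * W * K ^_ (2 ^ e.+1) * ('C(K * K - 2 ^ e, N - 2 ^ e) * (K * K) ^_ (2 ^ e)));
  first by ring.
by rewrite bin_sub_ffact //; ring.
Qed.

End RHA.

Unset Implicit Arguments.
Import GRing.Theory Num.Theory.
Local Open Scope ring_scope.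

Theorem proposition5 (k : nat -> nat)
  (kpos : forall i, (0 < k i)%N)
  (kgrow : forall i, (k i <= k i.+1 <= k i ^ 2)%N)
  (n m : nat) (mn : (m <= n)%N) :
  ((k m < 2 ^ (n - m))%N -> Prob k n (A_event n m) = 0) /\
  ((2 ^ (n - m) <= k m)%N -> (m < n)%N ->
     Prob k n (A_event n m) =
     Prob k n (A_event n m.+1) *
       ((k m ^_ (2 ^ (n - m)))%:R / ((k m ^ 2) ^_ (2 ^ (n - m).-1))%:R)).
Proof.
have [e ->] : exists e, n = (m + e)%N by exists (n - m)%N; rewrite subnKC.
rewrite addKn; split => [small_km | large_km].
  by rewrite /Prob count_A_event ffact_small // !muln0 mul0r.
case: e large_km => [|e] large_km; first by rewrite addn0 ltnn.
have e_le_km : (2 ^ e <= k m)%N by apply: leq_trans large_km; rewrite leq_exp2l.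
have e_le_km1 : (2 ^ e <= k m.+1)%N by case/andP: (kgrow m) => /(leq_trans e_le_km).
have Q_neq0 : ((k m ^ 2) ^_ (2 ^ e))%:R != 0 :> rat.
  by rewrite pnatr_eq0 -lt0n ffact_gt0 (leq_trans e_le_km) // -mulnn leq_pmulr.
move=> _; rewrite /Prob -[X in X / _](mulfK Q_neq0) -natrM count_A_event_succ //.
by rewrite natrM; ring.
Qed.
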